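(* In the real projective plane, let $g_1,g_2$ be distinct lines and $C_1,C_2$ distinct points, and suppose the coordinate system is such that $g_1$ and $g_2$ meet on the line at infinity (they are parallel lines in the affine plane), $C_2$ lies on the line at infinity, and $C_1$ is an affine point. Suppose that the distances from $C_1$ to $g_1$ and to $g_2$ are not equal. Then the polygonal lines inscribed in $g_1\cup g_2$ and circumscribed about the singular dual conic given by $C_1,C_2$ satisfy: (i) the only finite such polygonal line consists of a single segment, determined by the intersection points of $g_1$ and $g_2$ with the line $C_1C_2$; (ii) all other such polygonal lines are not closed; moreover, their sides approach the line $C_1C_2$ in one direction and diverge to infinity in the other direction.
   Context: The singular dual conic given by $C_1,C_2$ is the union of the pencils of lines through $C_1$ and through $C_2$ (lines through $C_2$ are lines parallel to a fixed direction). A polygonal line is inscribed in $g_1\cup g_2$ and circumscribed about this dual conic if its vertices lie alternately on $g_1$ and $g_2$ and its side lines pass alternately through $C_1$ and $C_2$; it is closed if its vertex sequence is periodic. *)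

From HB Require Import structures.
From mathcomp Require Import all_boot all_order all_algebra.
From mathcomp Require Import reals.
Set Implicit Arguments. Unset Strict Implicit. Unset Printing Implicit Defensive.
Import Order.TTheory GRing.Theory Num.Theory.
Local Open Scope ring_scope.

Definition point (R : realType) := (R * R)%type.

Section Defs.
Variable R : realType.
Implicit Types (P Q X C n d u : point R) (c : R).

Definition vsub P Q : point R := (P.1 - Q.1, P.2 - Q.2).
Definition det2 u (v : point R) : R := u.1 * v.2 - u.2 * v.1.
Definition dot u (v : point R) : R := u.1 * v.1 + u.2 * v.2.
Definition enorm u : R := Num.sqrt (u.1 ^+ 2 + u.2 ^+ 2).
Definition edist P Q : R := enorm (vsub P Q).

Definition aline n c : point R -> Prop := fun X => dot n X = c.
Definition dist_to_aline P n c : R := `|dot n P - c| / enorm n.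
Definition line_through P Q : point R -> Prop :=
  fun X => det2 (vsub Q P) (vsub X P) = 0.
(* the line joining the affine point C and the point at infinity of
   direction d (i.e. the line through C parallel to d) *)
Definition line_dir C d : point R -> Prop := fun X => det2 d (vsub X C) = 0.
(* the line PQ passes through the point at infinity of direction d *)
Definition passes_inf P Q d : Prop := det2 (vsub Q P) d = 0.

(* A polygonal line: a set of consecutive integer indices [pl_dom]
   (an integer interval, possibly infinite in one or both directions),
   vertices [pl_V k] for k in the domain, and two parities:
   vertex k lies on g1 iff  odd|k| (+) pl_b = false (else on g2);
   side (k,k+1) passes through C1 iff odd|k| (+) pl_e = false
   (else through C2).  *)
Record polyline := PolyLine {
  pl_dom : int -> Prop;
  pl_V : int -> point R;
  pl_b : bool;
  pl_e : bool }.

Variables (n : point R) (c1 c2 : R) (C1 d : point R).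
(* g1 = aline n c1, g2 = aline n c2 (parallel), C1 affine point,
   C2 = point at infinity of direction d. *)

Definition is_polyline (pl : polyline) : Prop :=
  [/\ exists k, pl_dom pl k,
      (forall i j k : int, pl_dom pl i -> pl_dom pl k -> i <= j <= k -> pl_dom pl j),
      (forall k, pl_dom pl k ->
         aline n (if odd `|k|%N (+) pl_b pl then c2 else c1) (pl_V pl k)),
      (forall k, pl_dom pl k -> pl_dom pl (k + 1) ->
         if odd `|k|%N (+) pl_e pl
         then passes_inf (pl_V pl k) (pl_V pl (k + 1)) d
         else line_through (pl_V pl k) (pl_V pl (k + 1)) C1) &
      (* consecutive sides are distinct lines (the two different tangents
         from a vertex to the singular dual conic) *)
      (forall k, pl_dom pl (k - 1) -> pl_dom pl k -> pl_dom pl (k + 1) ->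
         ~ (forall X, line_through (pl_V pl (k - 1)) (pl_V pl k) X <->
                      line_through (pl_V pl k) (pl_V pl (k + 1)) X))].

Definition maximal_polyline (pl : polyline) : Prop :=
  forall pl' : polyline, is_polyline pl' ->
    pl_b pl' = pl_b pl -> pl_e pl' = pl_e pl ->
    (forall k, pl_dom pl k -> pl_dom pl' k /\ pl_V pl' k = pl_V pl k) ->
    forall k, pl_dom pl' k -> pl_dom pl k.

End Defs.

Definition finite_polyline (R : realType) (pl : polyline R) : Prop :=
  exists N : nat, forall k, pl_dom pl k -> (`|k| <= N)%N.

Definition closed_polyline (R : realType) (pl : polyline R) : Prop :=
  exists p : int, 0 < p /\
    forall k, pl_dom pl k -> pl_dom pl (k + p) /\ pl_V pl (k + p) = pl_V pl k.

Definition seq_cvg_to (R : realType) (u : nat -> point R) (X : point R) : Prop :=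
  forall eps : R, 0 < eps -> exists N : nat, forall k, (N <= k)%N -> edist (u k) X < eps.

Definition seq_diverges (R : realType) (u : nat -> point R) : Prop :=
  forall M : R, exists N : nat, forall k, (N <= k)%N -> M < enorm (u k).

(* the sides approach the line L: consecutive vertices (of the two kinds)
   converge to points X, Y of L, so the sides converge to the segment XY of L *)
Definition sides_approach (R : realType) (V : nat -> point R) (L : point R -> Prop) : Prop :=
  exists X Y, L X /\ L Y /\
    seq_cvg_to (fun k => V (2 * k)%N) X /\ seq_cvg_to (fun k => V (2 * k + 1)%N) Y.

From HB Require Import structures.
From mathcomp Require Import all_boot all_order all_algebra.
From mathcomp Require Import reals.
From mathcomp Require Import ring lra zify.
Import Order.TTheory GRing.Theory Num.Theory.
Set Implicit Arguments.
Unset Strict Implicit.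
Unset Printing Implicit Defensive.
Local Open Scope ring_scope.

(* Use the affine coordinates [level X = n.X] and [offset X = det(d, X - C1)]. A side
   through C2 (parallel to d) keeps the offset, while a side through C1 from level c to
   level c' multiplies it by (t - c') / (t - c), where t is the level of C1. So two
   consecutive sides return to the same level and multiply the offset by a fixed ratio
   mu, with |mu| <> 1 exactly because C1 is not equidistant from g1 and g2.
   A vertex on the axis C1C2 forces its neighbours onto the axis, and three consecutive
   vertices cannot be collinear, so a polygonal line meeting the axis is the single
   segment of (i). A polygonal line can always be extended at an end vertex off the axis,
   so every other maximal one is bi-infinite with offsets in geometric progression of
   ratio mu every two steps: its sides tend to the axis in one direction, go to infinity
   in the other, and the vertex sequence is never periodic. *)

Lemma odd_abszD1 (k : int) : odd (absz (k + 1)) = ~~ odd (absz k).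
Proof.
have : absz (k + 1) = (absz k).+1 \/ absz k = (absz (k + 1)).+1 by lia.
by case=> ->; rewrite /= ?negbK.
Qed.

Lemma odd_abszB1 (k : int) : odd (absz (k - 1)) = ~~ odd (absz k).
Proof. by rewrite -{2}(subrK 1 k) odd_abszD1 negbK. Qed.

Lemma int_shift_ind (P : int -> Prop) (k0 : int) : P k0 ->
  (forall k, P k -> P (k + 1)) -> (forall k, P k -> P (k - 1)) -> forall k, P k.
Proof.
move=> P0 Psucc Ppred k; rewrite -(subrK k0 k).
elim/int_ind: (k - k0) => [|i|i]; first by rewrite add0r.
- have -> : (i.+1)%:Z + k0 = i%:Z + k0 + 1 by lia.
  exact: Psucc.
- have -> : - (i.+1)%:Z + k0 = - i%:Z + k0 - 1 by lia.
  exact: Ppred.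
Qed.

Lemma int_bounded_last (D : int -> Prop) (k0 : int) (N : nat) :
  D k0 -> (forall k, D k -> (absz k <= N)%N) -> exists M, D M /\ ~ D (M + 1).
Proof.
move=> Dk0 bounded.
case: (boolp.pselect (exists M, D M /\ ~ D (M + 1))) => // noend; exfalso.
have Dsucc M : D M -> D (M + 1).
  by move=> DM; case: (boolp.pselect (D (M + 1))) => // ?; case: noend; exists M.
have Dup (i : nat) : D (k0 + i%:Z).
  elim: i => [|i IHi]; first by rewrite addr0.
  by rewrite -addn1 PoszD addrA; apply: Dsucc.
by have := bounded _ (Dup (N + absz k0).+1); lia.
Qed.

Lemma step2_periodic (T : Type) (f : int -> T) :
  (forall k, f (k + 1 + 1) = f k) -> forall (a : int) (j : nat), f (a + (2 * j)%N) = f a.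
Proof.
move=> f_step2 a; elim=> [|j IHj]; first by rewrite addr0.
have -> : a + (2 * j.+1)%N = a + (2 * j)%N + 1 + 1 by lia.
by rewrite f_step2 IHj.
Qed.

Lemma step2_geometric (R : pzRingType) (f : int -> R) (m : R) :
  (forall k, f (k + 1 + 1) = m * f k) ->
  forall (a : int) (j : nat), f (a + (2 * j)%N) = m ^+ j * f a.
Proof.
move=> f_step2 a; elim=> [|j IHj]; first by rewrite addr0 expr0 mul1r.
have -> : a + (2 * j.+1)%N = a + (2 * j)%N + 1 + 1 by lia.
by rewrite f_step2 IHj exprS mulrA.
Qed.

Lemma expr_unbounded (R : archiRealFieldType) (r : R) : 1 < r ->
  forall M : R, exists N : nat, forall k, (N <= k)%N -> M < r ^+ k.
Proof.
move=> r_gt1 M.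
have bernoulli (k : nat) : 1 + k%:R * (r - 1) <= r ^+ k.
  elim: k => [|k IHk]; first by rewrite mul0r addr0 expr0.
  rewrite exprS -natr1.
  have := ler_wpM2l (ltW (lt_trans ltr01 r_gt1)) IHk.
  have : 0 <= k%:R * ((r - 1) * (r - 1)) by rewrite mulr_ge0 ?mulr_ge0 // subr_ge0 ltW.
  nra.
set x := `|M| / (r - 1).
have x_ge0 : 0 <= x by rewrite divr_ge0 // subr_ge0 ltW.
have M_le : M <= x * (r - 1) by rewrite divfK ?subr_eq0 ?gt_eqF // real_ler_norm ?num_real.
exists (Num.bound x) => k le_bound_k.
have : (Num.bound x)%:R <= k%:R :> R by rewrite ler_nat.
have := archi_boundP x_ge0; have := bernoulli k; nra.
Qed.

Lemma expr_vanishing (R : archiRealFieldType) (q A eps : R) : 0 < q -> q < 1 -> 0 < eps ->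
  exists N : nat, forall k, (N <= k)%N -> q ^+ k * A < eps.
Proof.
move=> q_gt0 q_lt1 eps_gt0.
have invq_gt1 : 1 < q^-1 by rewrite invf_gt1.
have [N HN] := expr_unbounded invq_gt1 (A / eps).
exists N => k /HN; rewrite ltr_pdivrMr // exprVn => lt_A.
by rewrite mulrC -ltr_pdivlMr ?exprn_gt0 // mulrC.
Qed.

Section SingularDualConic.
Variables (R : realType) (n C1 d : point R).
Hypothesis nd_neq0 : dot n d != 0.

Definition level (X : point R) : R := dot n X.

(* [offset] vanishes exactly on the line C1C2, called the axis below. *)
Definition offset (X : point R) : R := det2 d (vsub X C1).

Lemma offset_C1 : offset C1 = 0.
Proof. by rewrite /offset /det2 /vsub /=; ring. Qed.

Lemma line_throughE (P Q X : point R) : line_through P Q X <->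
  (level Q - level P) * (offset X - offset P) = (offset Q - offset P) * (level X - level P).
Proof.
have key : (level Q - level P) * (offset X - offset P) - (offset Q - offset P) * (level X - level P)
           = dot n d * det2 (vsub Q P) (vsub X P).
  by rewrite /level /offset /dot /det2 /vsub /=; ring.
rewrite /line_through; split=> [det0|/eqP].
  by apply/eqP; rewrite -subr_eq0 key det0 mulr0.
by rewrite -subr_eq0 key mulf_eq0 (negbTE nd_neq0) => /eqP.
Qed.

Lemma line_through_C1_offset (P Q : point R) : line_through P Q C1 ->
  offset Q * (level C1 - level P) = offset P * (level C1 - level Q).
Proof. by move/line_throughE; rewrite offset_C1; lra. Qed.

Lemma passes_inf_offset (P Q : point R) : passes_inf P Q d -> offset Q = offset P.
Proof. by rewrite /passes_inf /offset /det2 /vsub /=; lra. Qed.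

Lemma line_throughC (P Q X : point R) : line_through P Q X <-> line_through Q P X.
Proof. by rewrite /line_through /det2 /vsub /=; split; lra. Qed.

Lemma passes_inf_sym (P Q : point R) : passes_inf P Q d -> passes_inf Q P d.
Proof. by rewrite /passes_inf /det2 /vsub /=; lra. Qed.

Lemma line_through_axis (A B X : point R) : level A != level B ->
  offset A = 0 -> offset B = 0 -> line_through A B X <-> offset X = 0.
Proof.
move=> lAB oA oB; rewrite line_throughE oA oB !subr0 mul0r.
split=> [/eqP|->]; last by rewrite mulr0.
by rewrite mulf_eq0 subr_eq0 eq_sym (negbTE lAB) => /eqP.
Qed.

Lemma side_through_C1_C2_offset0 (P Q : point R) : level P != level Q ->
  passes_inf P Q d -> line_through P Q C1 -> offset P = 0.
Proof.
move=> lPQ /passes_inf_offset oQ /line_through_C1_offset; rewrite oQ => E.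
have /eqP : offset P * (level Q - level P) = 0 by lra.
by rewrite mulf_eq0 (subr_eq0 (level Q)) (eq_sym (level Q)) (negbTE lPQ) orbF => /eqP.
Qed.

Lemma mixed_sides_differ (A B C : point R) :
  level A != level B -> level C != level B -> offset B != 0 ->
  (passes_inf A B d /\ line_through B C C1) \/ (line_through A B C1 /\ passes_inf B C d) ->
  ~ (forall X, line_through A B X <-> line_through B C X).
Proof.
move=> lAB lCB oB [[AB BC]|[AB BC]] same; move/eqP: oB; apply.
- apply: (side_through_C1_C2_offset0 _ (passes_inf_sym AB)); first by rewrite eq_sym.
  exact/line_throughC/(same C1).2.
- by apply: (side_through_C1_C2_offset0 _ BC ((same C1).1 AB)); rewrite eq_sym.
Qed.

Definition along_d (P : point R) (c : R) : point R :=
  (P.1 + (c - level P) / dot n d * d.1, P.2 + (c - level P) / dot n d * d.2).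

Definition toward_C1 (P : point R) (c : R) : point R :=
  (C1.1 + (c - level C1) / (level P - level C1) * (P.1 - C1.1),
   C1.2 + (c - level C1) / (level P - level C1) * (P.2 - C1.2)).

Definition axis_point (c : R) : point R := along_d C1 c.

Lemma level_along_d (P : point R) (c : R) : level (along_d P c) = c.
Proof.
have -> : level (along_d P c) = level P + (c - level P) / dot n d * dot n d.
  by rewrite /along_d /level /dot /=; ring.
by rewrite divfK // addrC subrK.
Qed.

Lemma passes_inf_along_d (P : point R) (c : R) : passes_inf P (along_d P c) d.
Proof. by rewrite /passes_inf /along_d /det2 /vsub /=; ring. Qed.

Lemma level_toward_C1 (P : point R) (c : R) :
  level P != level C1 -> level (toward_C1 P c) = c.
Proof.
move=> lP; have -> : level (toward_C1 P c) =
    level C1 + (c - level C1) / (level P - level C1) * (level P - level C1).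
  by rewrite /toward_C1 /level /dot /=; ring.
by rewrite divfK ?subr_eq0 // addrC subrK.
Qed.

Lemma line_through_toward_C1 (P : point R) (c : R) : line_through P (toward_C1 P c) C1.
Proof. by rewrite /line_through /toward_C1 /det2 /vsub /=; ring. Qed.

Lemma level_axis_point (c : R) : level (axis_point c) = c.
Proof. exact: level_along_d. Qed.

Lemma offset_axis_point (c : R) : offset (axis_point c) = 0.
Proof. by rewrite (passes_inf_offset (passes_inf_along_d C1 c)) offset_C1. Qed.

Lemma abs_coord_le_enorm (X : point R) : `|X.1| <= enorm X /\ `|X.2| <= enorm X.
Proof.
by rewrite /enorm -!sqrtr_sqr; split; apply: ler_wsqrtr; rewrite ?lerDl ?lerDr sqr_ge0.
Qed.

Lemma enorm_le_abs_sum (X : point R) : enorm X <= `|X.1| + `|X.2|.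
Proof.
have sum_ge0 : 0 <= `|X.1| + `|X.2| by rewrite addr_ge0.
rewrite /enorm -(ger0_norm sum_ge0) -sqrtr_sqr; apply: ler_wsqrtr.
rewrite -(real_normK (num_real X.1)) -(real_normK (num_real X.2)).
by have := normr_ge0 X.1; have := normr_ge0 X.2; nra.
Qed.

Lemma edist_same_level (P Q : point R) : level P = level Q ->
  edist P Q <= (`|n.1| + `|n.2|) / `|dot n d| * `|offset P - offset Q|.
Proof.
move=> lPQ.
have E1 : P.1 - Q.1 = - n.2 * (offset P - offset Q) / dot n d.
  apply: (mulIf nd_neq0); rewrite divfK //; apply/eqP; rewrite -subr_eq0.
  have -> : (P.1 - Q.1) * dot n d - - n.2 * (offset P - offset Q) = d.1 * (level P - level Q).
    by rewrite /level /offset /dot /det2 /vsub /=; ring.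
  by rewrite lPQ subrr mulr0.
have E2 : P.2 - Q.2 = n.1 * (offset P - offset Q) / dot n d.
  apply: (mulIf nd_neq0); rewrite divfK //; apply/eqP; rewrite -subr_eq0.
  have -> : (P.2 - Q.2) * dot n d - n.1 * (offset P - offset Q) = d.2 * (level P - level Q).
    by rewrite /level /offset /dot /det2 /vsub /=; ring.
  by rewrite lPQ subrr mulr0.
apply: le_trans (enorm_le_abs_sum _) _.
by rewrite /= E1 E2 !normrM !normfV normrN -!mulrDl addrC mulrAC.
Qed.

Lemma abs_offset_le (X : point R) :
  `|offset X| <= (`|d.1| + `|d.2|) * (enorm X + (`|C1.1| + `|C1.2|)).
Proof.
have [X1 X2] := abs_coord_le_enorm X.
have := ler_normB (d.1 * (X.2 - C1.2)) (d.2 * (X.1 - C1.1)); rewrite !normrM.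
have := ler_normB X.2 C1.2; have := ler_normB X.1 C1.1.
have := normr_ge0 d.1; have := normr_ge0 d.2; have := normr_ge0 C1.1; have := normr_ge0 C1.2.
have := normr_ge0 (X.1 - C1.1); have := normr_ge0 (X.2 - C1.2).
by rewrite /offset /det2 /vsub /=; nra.
Qed.

Lemma abs_dir_sum_gt0 : 0 < `|d.1| + `|d.2|.
Proof.
rewrite lt_def addr_ge0 // andbT paddr_eq0 // !normr_eq0.
apply: contra nd_neq0 => /andP[/eqP d1 /eqP d2].
by rewrite /dot d1 d2 !mulr0 addr0.
Qed.

Definition offset_ratio (c c' : R) : R := (level C1 - c') / (level C1 - c).

Lemma offset_C1_side (P Q : point R) : line_through P Q C1 -> level P != level C1 ->
  offset Q = offset_ratio (level P) (level Q) * offset P.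
Proof.
move=> /line_through_C1_offset E lP.
have lP_neq0 : level C1 - level P != 0 by rewrite subr_eq0 eq_sym.
by apply: (mulIf lP_neq0); rewrite E /offset_ratio mulrAC divfK // mulrC.
Qed.

Lemma offset_ratio_neq0 (c c' : R) : c != level C1 -> c' != level C1 -> offset_ratio c c' != 0.
Proof. by move=> c_C1 c'_C1; rewrite mulf_neq0 ?invr_eq0 // subr_eq0 eq_sym. Qed.

Lemma abs_offset_ratio_neq1 (c c' : R) : c != level C1 ->
  `|level C1 - c'| != `|level C1 - c| -> `|offset_ratio c c'| != 1.
Proof.
move=> c_C1; apply: contra => /eqP ratio1; apply/eqP.
have ne0 : `|level C1 - c| != 0 by rewrite normr_eq0 subr_eq0 eq_sym.
by rewrite -[RHS]mul1r -ratio1 /offset_ratio normrM normfV divfK.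
Qed.

Lemma offset_unbounded_diverges (u : nat -> point R) :
  (forall M, exists N : nat, forall k, (N <= k)%N -> M < `|offset (u k)|) -> seq_diverges u.
Proof.
move=> unbounded M; set K0 := `|C1.1| + `|C1.2|.
have [N HN] := unbounded ((`|d.1| + `|d.2|) * (M + K0)).
exists N => k /HN lt_offset.
have := lt_le_trans lt_offset (abs_offset_le (u k)).
by rewrite ltr_pM2l ?abs_dir_sum_gt0 // ltrD2r.
Qed.

Section TwoPeriodic.
Variables (W : int -> point R) (m : R).
Hypothesis level_W : forall k, level (W (k + 1 + 1)) = level (W k).
Hypothesis offset_W : forall k, offset (W (k + 1 + 1)) = m * offset (W k).
Hypotheses (m_gt0 : 0 < `|m|) (m_lt1 : `|m| < 1).

Lemma two_periodic_cvg_axis (a : int) :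
  seq_cvg_to (fun j : nat => W (a + (2 * j)%N)) (axis_point (level (W a))).
Proof.
move=> eps eps_gt0.
have [N HN] := expr_vanishing ((`|n.1| + `|n.2|) / `|dot n d| * `|offset (W a)|)
  m_gt0 m_lt1 eps_gt0.
exists N => j /HN; apply: le_lt_trans.
have level_eq : level (W (a + (2 * j)%N)) = level (axis_point (level (W a))).
  by rewrite level_axis_point; exact: (step2_periodic (f := level \o W) level_W).
apply: le_trans (edist_same_level level_eq) _.
by rewrite offset_axis_point subr0 (step2_geometric offset_W) normrM normrX mulrCA.
Qed.

Lemma two_periodic_sides_approach : sides_approach (fun k : nat => W k) (line_dir C1 d).
Proof.
exists (axis_point (level (W 0))), (axis_point (level (W 1))).
do 2 (split; first exact: offset_axis_point); split.
- by move=> eps /(two_periodic_cvg_axis 0) [N HN]; exists N => k /HN; rewrite add0r.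
- move=> eps /(two_periodic_cvg_axis 1) [N HN]; exists N => k /HN.
  by have -> : ((2 * k + 1)%N : int) = 1 + (2 * k)%N by lia.
Qed.

Lemma two_periodic_offset_unbounded : offset (W 0) != 0 -> offset (W (- 1)) != 0 ->
  forall M, exists N : nat, forall k, (N <= k)%N -> M < `|offset (W (- k%:Z))|.
Proof.
move=> o0 o1 M; set r := `|m|^-1; set B := Num.min `|offset (W 0)| `|offset (W (- 1))|.
have B_gt0 : 0 < B by rewrite lt_min !normr_gt0 o0 o1.
have r_gt1 : 1 < r by rewrite invf_gt1.
have grow (a : int) (j : nat) : `|offset (W (a - (2 * j)%N%:Z))| = r ^+ j * `|offset (W a)|.
  rewrite -{2}(subrK (Posz (2 * j)) a) (step2_geometric offset_W) normrM normrX mulrA.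
  by rewrite -exprMn mulVf ?expr1n ?mul1r // normr_eq0 -normr_gt0.
have [N HN] := expr_unbounded r_gt1 (M / B).
exists N.*2 => k le_k.
have -> : - k%:Z = - (odd k)%:Z - (2 * k./2)%N%:Z by have := odd_double_half k; rewrite -mul2n; lia.
rewrite grow; apply: lt_le_trans (_ : r ^+ k./2 * B <= _).
  by rewrite -ltr_pdivrMr // HN // -(half_double N) half_leq.
apply: ler_wpM2l; first by rewrite exprn_ge0 // ltW // (lt_trans ltr01).
by case: (odd k); rewrite ?oppr0 ge_min lexx ?orbT.
Qed.
End TwoPeriodic.

Variables c1 c2 : R.
Hypothesis c1_neq_c2 : c1 != c2.
Hypotheses (C1_notin_g1 : level C1 != c1) (C1_notin_g2 : level C1 != c2).

Definition glevel (x : bool) : R := if x then c2 else c1.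

Lemma glevel_neq_C1 (x : bool) : glevel x != level C1.
Proof. by case: x; rewrite eq_sym. Qed.

Lemma glevel_negb (x : bool) : glevel (~~ x) != glevel x.
Proof. by case: x; rewrite //= eq_sym. Qed.

Definition C1_step_ratio (x : bool) : R := offset_ratio (glevel x) (glevel (~~ x)).

Local Notation is_pl := (is_polyline n c1 c2 C1 d).
Local Notation is_max := (maximal_polyline n c1 c2 C1 d).

Section OnePolyline.
Variable pl : polyline R.
Hypothesis pl_ok : is_pl pl.
Local Notation D := (pl_dom pl).
Local Notation V := (pl_V pl).

Lemma polyline_interval (i j k : int) : D i -> D k -> i <= j <= k -> D j.
Proof. by case: pl_ok => _ interval _ _ _; apply: interval. Qed.

Lemma polyline_level k : D k -> level (V k) = glevel (odd (absz k) (+) pl_b pl).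
Proof. by case: pl_ok => _ _ on_g _ _ /on_g. Qed.

Lemma polyline_level_neq_C1 k : D k -> level (V k) != level C1.
Proof. by move=> Dk; rewrite polyline_level ?glevel_neq_C1. Qed.

Lemma polyline_level_succ k : D k -> D (k + 1) -> level (V (k + 1)) != level (V k).
Proof. by move=> Dk Dk1; rewrite !polyline_level // odd_abszD1 addNb glevel_negb. Qed.

Lemma polyline_level_step2 k : D k -> D (k + 1 + 1) -> level (V (k + 1 + 1)) = level (V k).
Proof. by move=> Dk Dk2; rewrite !polyline_level // !odd_abszD1 negbK. Qed.

Lemma polyline_side k : D k -> D (k + 1) ->
  if odd (absz k) (+) pl_e pl then passes_inf (V k) (V (k + 1)) d
  else line_through (V k) (V (k + 1)) C1.
Proof. by case: pl_ok => _ _ _ sides _; apply: sides. Qed.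

Lemma polyline_sides_differ k : D (k - 1) -> D k -> D (k + 1) ->
  ~ (forall X, line_through (V (k - 1)) (V k) X <-> line_through (V k) (V (k + 1)) X).
Proof. by case: pl_ok => _ _ _ _; apply. Qed.

Lemma polyline_offset_eq0_succ k : D k -> D (k + 1) ->
  (offset (V (k + 1)) == 0) = (offset (V k) == 0).
Proof.
move=> Dk Dk1; have := polyline_side Dk Dk1.
case: ifP => _ side; first by rewrite (passes_inf_offset side).
rewrite (offset_C1_side side) ?polyline_level_neq_C1 // mulf_eq0.
by rewrite (negbTE (offset_ratio_neq0 _ _)) ?polyline_level_neq_C1.
Qed.

Lemma polyline_no_three_on_axis k : D (k - 1) -> D k -> D (k + 1) -> offset (V k) != 0.
Proof.
move=> Dk' Dk Dk1; apply/eqP => ok; apply: (polyline_sides_differ Dk' Dk Dk1) => X.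
have Dk'1 : D (k - 1 + 1) by rewrite subrK.
have ok' : offset (V (k - 1)) = 0.
  by apply/eqP; rewrite -(polyline_offset_eq0_succ Dk' Dk'1) subrK ok.
have ok1 : offset (V (k + 1)) = 0 by apply/eqP; rewrite polyline_offset_eq0_succ // ok.
have lk := polyline_level_succ Dk' Dk'1; rewrite subrK eq_sym in lk.
have lk1 := polyline_level_succ Dk Dk1; rewrite eq_sym in lk1.
by rewrite !line_through_axis.
Qed.

Lemma polyline_axis_window k j : D k -> offset (V k) = 0 -> D j -> k - 1 <= j <= k + 1.
Proof.
move=> Dk ok Dj; apply/andP; split; rewrite leNgt; apply/negP => out.
- have Dk' : D (k - 1) by apply: (polyline_interval Dj Dk); lia.
  have Dk'' : D (k - 1 - 1) by apply: (polyline_interval Dj Dk); lia.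
  have Dk'1 : D (k - 1 + 1) by rewrite subrK.
  apply: (negP (polyline_no_three_on_axis Dk'' Dk' Dk'1)).
  by rewrite -(polyline_offset_eq0_succ Dk' Dk'1) subrK ok.
- have Dk1 : D (k + 1) by apply: (polyline_interval Dk Dj); lia.
  have Dk2 : D (k + 1 + 1) by apply: (polyline_interval Dk Dj); lia.
  have Dk1' : D (k + 1 - 1) by rewrite addrK.
  apply: (negP (polyline_no_three_on_axis Dk1' Dk1 Dk2)).
  by rewrite polyline_offset_eq0_succ // ok.
Qed.

Lemma polyline_offset_step2 k : D k -> D (k + 1) -> D (k + 1 + 1) ->
  offset (V (k + 1 + 1)) = C1_step_ratio (pl_e pl (+) pl_b pl) * offset (V k).
Proof.
move=> Dk Dk1 Dk2.
have side0 := polyline_side Dk Dk1; have side1 := polyline_side Dk1 Dk2.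
have lk := polyline_level Dk; have lk1 := polyline_level Dk1; have lk2 := polyline_level Dk2.
rewrite !odd_abszD1 negbK in side1 lk1 lk2.
move: side0 side1 lk lk1 lk2; rewrite /C1_step_ratio.
case: (odd (absz k)); case: (pl_e pl) => /= side0 side1 lk lk1 lk2.
all: first
  [ by rewrite (passes_inf_offset side1) (offset_C1_side side0) ?polyline_level_neq_C1 //
       lk lk1 ?negbK
  | by rewrite (offset_C1_side side1) ?polyline_level_neq_C1 // (passes_inf_offset side0)
       lk1 lk2 ?negbK ].
Qed.
End OnePolyline.

(* Reindexing by [k |-> - k] keeps the parity of the vertices but shifts that of the sides. *)
Definition rev_polyline (pl : polyline R) : polyline R :=
  PolyLine (fun k => pl_dom pl (- k)) (fun k => pl_V pl (- k)) (pl_b pl) (~~ pl_e pl).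

Lemma is_polyline_rev pl : is_pl pl -> is_pl (rev_polyline pl).
Proof.
move=> pl_ok; split=> /=.
- by have [[k Dk] _ _ _ _] := pl_ok; exists (- k); rewrite opprK.
- by move=> i j k Di Dk ijk; apply: (polyline_interval pl_ok Dk Di); lia.
- by move=> k /(polyline_level pl_ok); rewrite abszN.
- move=> k Dk Dk1; have Dk1' : pl_dom pl (- (k + 1) + 1) by rewrite opprD subrK.
  have := polyline_side pl_ok Dk1 Dk1'.
  rewrite opprD subrK -[in odd _]opprD abszN odd_abszD1 addNb -addbN.
  by case: ifP => _; [apply: passes_inf_sym | move/line_throughC].
- move=> k Dk' Dk Dk1 same.
  have Dk1' : pl_dom pl (- k - 1) by rewrite -opprD.
  have Dk'' : pl_dom pl (- k + 1) by rewrite (_ : - k + 1 = - (k - 1)) //; lia.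
  apply: (polyline_sides_differ pl_ok Dk1' Dk Dk'') => X.
  rewrite line_throughC [in X in _ <-> X]line_throughC -opprD.
  by rewrite (_ : - k + 1 = - (k - 1)); [rewrite same | lia].
Qed.

Lemma maximal_polyline_rev pl : is_pl pl -> is_max pl -> is_max (rev_polyline pl).
Proof.
move=> pl_ok pl_max pl' pl'_ok eb ee ext k Dk.
have := pl_max (rev_polyline pl') (is_polyline_rev pl'_ok) eb _ _ (- k).
rewrite /= opprK; apply=> //; first by rewrite ee negbK.
by move=> j Dj; have := ext (- j); rewrite /= !opprK; apply.
Qed.

Definition next_vertex (pl : polyline R) (M : int) : point R :=
  let c := glevel (odd (absz (M + 1)) (+) pl_b pl) in
  if odd (absz M) (+) pl_e pl then along_d (pl_V pl M) c else toward_C1 (pl_V pl M) c.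

Definition snoc_polyline (pl : polyline R) (M : int) : polyline R :=
  PolyLine (fun k => pl_dom pl k \/ k = M + 1)
    (fun k => if k == M + 1 then next_vertex pl M else pl_V pl k) (pl_b pl) (pl_e pl).

Section Snoc.
Variables (pl : polyline R) (M : int).
Hypothesis pl_ok : is_pl pl.
Hypotheses (DM : pl_dom pl M) (DM1 : ~ pl_dom pl (M + 1)).
Local Notation D := (pl_dom pl).
Local Notation V := (pl_V pl).

Lemma level_next_vertex : level (next_vertex pl M) = glevel (odd (absz (M + 1)) (+) pl_b pl).
Proof.
rewrite /next_vertex; case: (odd _ (+) pl_e pl); first exact: level_along_d.
exact/level_toward_C1/(polyline_level_neq_C1 pl_ok).
Qed.

Lemma next_vertex_side : if odd (absz M) (+) pl_e pl then passes_inf (V M) (next_vertex pl M) d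
  else line_through (V M) (next_vertex pl M) C1.
Proof.
rewrite /next_vertex; case: (_ (+) _); first exact: passes_inf_along_d.
exact: line_through_toward_C1.
Qed.

Lemma polyline_le_last k : D k -> k <= M.
Proof.
by move=> Dk; rewrite leNgt; apply/negP => Mk; apply/DM1/(polyline_interval pl_ok DM Dk); lia.
Qed.

Lemma snoc_vertex k : D k -> pl_V (snoc_polyline pl M) k = V k.
Proof. by move=> Dk /=; case: eqP => // Ek; have := polyline_le_last Dk; lia. Qed.

Lemma is_polyline_snoc : (D (M - 1) -> offset (V M) != 0) -> is_pl (snoc_polyline pl M).
Proof.
move=> oM; have le_M := polyline_le_last; split.
- by exists M; left.
- move=> i j k [Di|->] [Dk|->] ijk; [left; exact: (polyline_interval pl_ok Di Dk)| | |].
  + by case: (j =P M + 1); [right | left; apply: (polyline_interval pl_ok Di DM); lia].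
  + by have := le_M _ Dk; lia.
  + by right; lia.
- move=> k [Dk|->]; first by rewrite (snoc_vertex Dk); apply: (polyline_level pl_ok).
  by rewrite /= eqxx; apply: level_next_vertex.
- move=> k [Dk|->] [Dk1|Ek1]; try by have := le_M _ Dk1; lia.
  + by rewrite !snoc_vertex //; apply: (polyline_side pl_ok).
  + by rewrite (_ : k = M) 1?(snoc_vertex DM) /= ?eqxx; [apply: next_vertex_side | lia].
  + lia.
- move=> k Dk' Dk [Dk1|Ek1].
    have Dk_old : D k by case: Dk => // Ek; have := le_M _ Dk1; lia.
    have Dk'_old : D (k - 1) by case: Dk' => // Ek; have := le_M _ Dk1; lia.
    by rewrite !snoc_vertex //; apply: (polyline_sides_differ pl_ok).
  have Ek : k = M by lia.
  rewrite Ek in Dk' *.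
  have DM' : D (M - 1) by case: Dk' => // ?; lia.
  have DM'1 : D (M - 1 + 1) by rewrite subrK.
  rewrite (snoc_vertex DM') (snoc_vertex DM) /= eqxx.
  apply: mixed_sides_differ.
  + by rewrite eq_sym -{1}(subrK 1 M) polyline_level_succ.
  + by rewrite level_next_vertex (polyline_level pl_ok DM) odd_abszD1 addNb glevel_negb.
  + exact: oM.
  + have := polyline_side pl_ok DM' DM'1; have := next_vertex_side.
    rewrite subrK odd_abszB1 addNb.
    by case: (_ (+) _) => /= side1 side0; [right | left].
Qed.
End Snoc.

Lemma maximal_last_on_axis pl M : is_pl pl -> is_max pl -> pl_dom pl M -> ~ pl_dom pl (M + 1) ->
  pl_dom pl (M - 1) /\ offset (pl_V pl M) = 0.
Proof.
move=> pl_ok pl_max DM DM1.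
case: (boolp.pselect (pl_dom pl (M - 1) /\ offset (pl_V pl M) = 0)) => // not_end.
exfalso; apply: (DM1); apply: (pl_max (snoc_polyline pl M)) => //; last by right.
- by apply: is_polyline_snoc => // DM'; apply/negP => /eqP oM; apply: not_end.
- by move=> k Dk; split; [left | apply: snoc_vertex].
Qed.

Lemma maximal_first_on_axis pl M : is_pl pl -> is_max pl -> pl_dom pl M -> ~ pl_dom pl (M - 1) ->
  pl_dom pl (M + 1) /\ offset (pl_V pl M) = 0.
Proof.
move=> pl_ok pl_max.
have := maximal_last_on_axis (M := - M) (is_polyline_rev pl_ok) (maximal_polyline_rev pl_ok pl_max).
by rewrite /= !opprD !opprK.
Qed.

Lemma maximal_off_axis_total pl k0 : is_pl pl -> is_max pl ->
  pl_dom pl k0 -> offset (pl_V pl k0) != 0 -> forall k, pl_dom pl k /\ offset (pl_V pl k) != 0.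
Proof.
move=> pl_ok pl_max Dk0 ok0; apply: (int_shift_ind (conj Dk0 ok0)) => k [Dk ok].
- have Dk1 : pl_dom pl (k + 1).
    case: (boolp.pselect (pl_dom pl (k + 1))) => // Dk1.
    by case: (maximal_last_on_axis pl_ok pl_max Dk Dk1) => _ /eqP; rewrite (negbTE ok).
  by rewrite (polyline_offset_eq0_succ pl_ok Dk Dk1).
- have Dk' : pl_dom pl (k - 1).
    case: (boolp.pselect (pl_dom pl (k - 1))) => // Dk'.
    by case: (maximal_first_on_axis pl_ok pl_max Dk Dk') => _ /eqP; rewrite (negbTE ok).
  have Dk'1 : pl_dom pl (k - 1 + 1) by rewrite subrK.
  by rewrite -(polyline_offset_eq0_succ pl_ok Dk' Dk'1) subrK.
Qed.

Definition axis_segment : polyline R :=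
  PolyLine (fun k => k = 0 \/ k = 1) (fun k => axis_point (if k == 0 then c1 else c2)) false false.

Lemma is_polyline_axis_segment : is_pl axis_segment.
Proof.
split=> /=.
- by exists 0; left.
- by move=> i j k [->|->] [->|->]; lia.
- by move=> k [->|->]; apply: level_axis_point.
- move=> k [->|->] [|]; try lia; move=> _ /=.
  apply/line_through_axis; rewrite ?offset_axis_point ?offset_C1 //.
  by rewrite !level_axis_point.
- by move=> k [|] ? [|] ? [|] ?; lia.
Qed.

Lemma maximal_axis_segment : is_max axis_segment.
Proof.
move=> pl pl_ok _ _ ext k Dk.
have [D0 V0] := ext 0 (or_introl erefl); have [D1 V1] := ext 1 (or_intror erefl).
have o0 : offset (pl_V pl 0) = 0 by rewrite V0 offset_axis_point.
have o1 : offset (pl_V pl 1) = 0 by rewrite V1 offset_axis_point.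
have := polyline_axis_window pl_ok D0 o0 Dk; have := polyline_axis_window pl_ok D1 o1 Dk.
rewrite /=; lia.
Qed.

Lemma maximal_finite_polyline pl : is_pl pl -> is_max pl -> finite_polyline pl ->
  exists m : int, (forall k, pl_dom pl k <-> k = m \/ k = m + 1) /\
    line_dir C1 d (pl_V pl m) /\ line_dir C1 d (pl_V pl (m + 1)).
Proof.
move=> pl_ok pl_max [N bounded]; have [[k0 Dk0] _ _ _ _] := pl_ok.
have [M [DM DM1]] := int_bounded_last Dk0 bounded.
have [DM' oM] := maximal_last_on_axis pl_ok pl_max DM DM1.
have DM'1 : pl_dom pl (M - 1 + 1) by rewrite subrK.
exists (M - 1); rewrite subrK; split; [|split] => //.
- move=> k; split=> [Dk|[->|->] //].
  have := polyline_axis_window pl_ok DM oM Dk.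
  by case: (k =P M + 1) => [Ek|]; [rewrite Ek in Dk | lia].
- by apply/eqP; rewrite -(polyline_offset_eq0_succ pl_ok DM' DM'1) subrK oM.
Qed.

Lemma C1_step_ratio_neq0 (x : bool) : C1_step_ratio x != 0.
Proof. exact/offset_ratio_neq0/glevel_neq_C1/glevel_neq_C1. Qed.

Hypothesis dist_C1_neq : `|level C1 - c1| != `|level C1 - c2|.

Lemma abs_C1_step_ratio_neq1 (x : bool) : `|C1_step_ratio x| != 1.
Proof.
by apply: abs_offset_ratio_neq1; [exact: glevel_neq_C1 | case: x; rewrite //= eq_sym].
Qed.

Lemma off_axis_polyline_not_closed pl : is_pl pl ->
  (forall k, pl_dom pl k /\ offset (pl_V pl k) != 0) -> ~ closed_polyline pl.
Proof.
move=> pl_ok total [p [p_gt0 periodic]].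
have [_ Vp] := periodic 0 (total 0).1; rewrite add0r in Vp.
have := polyline_level pl_ok (total p).1; rewrite Vp (polyline_level pl_ok (total 0).1) /=.
case odd_p: (odd (absz p)) => /= levels.
  by move/eqP: levels; rewrite eq_sym (negbTE (glevel_negb _)).
set j := (absz p)./2.
have p_even : p = (2 * j)%N%:Z by have := odd_double_half (absz p); rewrite odd_p -mul2n; lia.
have offset2 k := polyline_offset_step2 pl_ok (total k).1 (total (k + 1)).1 (total (k + 1 + 1)).1.
have := step2_geometric offset2 0 j.
rewrite add0r -p_even Vp => /eqP; rewrite -subr_eq0 -{1}[offset _]mul1r -mulrBl mulf_eq0.
rewrite (negbTE (total 0).2) orbF subr_eq0 eq_sym => /eqP /(congr1 Num.norm).
rewrite normrX normr1 => /eqP; rewrite pexprn_eq1 // (negbTE (abs_C1_step_ratio_neq1 _)) orbF.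
by move=> /eqP j0; move: p_gt0; rewrite p_even j0.
Qed.

Lemma maximal_infinite_polyline pl : is_pl pl -> is_max pl -> ~ finite_polyline pl ->
  (forall k, pl_dom pl k) /\ ~ closed_polyline pl /\
  ((sides_approach (fun k : nat => pl_V pl k%:Z) (line_dir C1 d) /\
    seq_diverges (fun k : nat => pl_V pl (- k%:Z))) \/
   (sides_approach (fun k : nat => pl_V pl (- k%:Z)) (line_dir C1 d) /\
    seq_diverges (fun k : nat => pl_V pl k%:Z))).
Proof.
move=> pl_ok pl_max infinite; have [[k0 Dk0] _ _ _ _] := pl_ok.
have ok0 : offset (pl_V pl k0) != 0.
  apply/negP => /eqP ok0; apply: infinite; exists (absz k0).+1 => k Dk.
  by have := polyline_axis_window pl_ok Dk0 ok0 Dk; lia.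
have total := maximal_off_axis_total pl_ok pl_max Dk0 ok0.
have Dall k : pl_dom pl k := (total k).1.
set m := C1_step_ratio (pl_e pl (+) pl_b pl).
have level2 k := polyline_level_step2 pl_ok (Dall k) (Dall (k + 1 + 1)).
have offset2 k := polyline_offset_step2 pl_ok (Dall k) (Dall (k + 1)) (Dall (k + 1 + 1)).
have m_gt0 : 0 < `|m| by rewrite normr_gt0 C1_step_ratio_neq0.
split=> //; split; first exact: off_axis_polyline_not_closed.
case: (ltgtP `|m| 1) => [m_lt1|m_gt1|/eqP]; last by rewrite (negbTE (abs_C1_step_ratio_neq1 _)).
  left; split; first exact: two_periodic_sides_approach level2 offset2 m_gt0 m_lt1.
  exact/offset_unbounded_diverges/two_periodic_offset_unbounded/(total _).2/(total _).2.
right; set W := fun k => pl_V pl (- k).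
have shift (k : int) : - (k + 1 + 1) + 1 + 1 = - k by lia.
have levelW k : level (W (k + 1 + 1)) = level (W k) by rewrite /W -(level2 (- _)) shift.
have offsetW k : offset (W (k + 1 + 1)) = m^-1 * offset (W k).
  by rewrite /W -[in RHS](shift k) offset2 mulKf // C1_step_ratio_neq0.
have minv_gt0 : 0 < `|m^-1| by rewrite normfV invr_gt0.
have minv_lt1 : `|m^-1| < 1 by rewrite normfV invf_lt1.
split; first exact: two_periodic_sides_approach levelW offsetW minv_gt0 minv_lt1.
apply: offset_unbounded_diverges => M.
have [N HN] := two_periodic_offset_unbounded offsetW minv_gt0 minv_lt1 (total _).2 (total _).2 M.
by exists N => k /HN; rewrite /W opprK.
Qed.

End SingularDualConic.

Theorem lemma3p14 (R : realType) (n : point R) (c1 c2 : R) (C1 d : point R) :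
  n != (0, 0) -> c1 != c2 ->            (* g1, g2 distinct parallel lines *)
  d != (0, 0) ->                        (* C2 = point at infinity of direction d *)
  dot n d != 0 ->                       (* C2 is not the common point at infinity of g1, g2 *)
  ~ aline n c1 C1 -> ~ aline n c2 C1 -> (* C1 does not lie on g1, g2 *)
  dist_to_aline C1 n c1 != dist_to_aline C1 n c2 ->
  (* (i) *)
  ((exists pl : polyline R, is_polyline n c1 c2 C1 d pl /\
      maximal_polyline n c1 c2 C1 d pl /\ finite_polyline pl) /\
   (forall pl : polyline R, is_polyline n c1 c2 C1 d pl ->
      maximal_polyline n c1 c2 C1 d pl -> finite_polyline pl ->
      exists m : int, (forall k, pl_dom pl k <-> k = m \/ k = m + 1) /\
        line_dir C1 d (pl_V pl m) /\ line_dir C1 d (pl_V pl (m + 1)))) /\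
  (* (ii) *)
  (forall pl : polyline R, is_polyline n c1 c2 C1 d pl ->
      maximal_polyline n c1 c2 C1 d pl -> ~ finite_polyline pl ->
      (forall k, pl_dom pl k) /\ ~ closed_polyline pl /\
      ((sides_approach (fun k : nat => pl_V pl k%:Z) (line_dir C1 d) /\
        seq_diverges (fun k : nat => pl_V pl (- k%:Z))) \/
       (sides_approach (fun k : nat => pl_V pl (- k%:Z)) (line_dir C1 d) /\
        seq_diverges (fun k : nat => pl_V pl k%:Z)))).
Proof.
move=> _ c1_neq_c2 _ nd_neq0 /eqP C1_notin_g1 /eqP C1_notin_g2 dist_neq.
have dist_C1_neq : `|level n C1 - c1| != `|level n C1 - c2|.
  by apply: contra_neq dist_neq; rewrite /dist_to_aline => ->.
split; [split|].
- exists (axis_segment n C1 d c1 c2).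
  split; first exact: is_polyline_axis_segment.
  by split; [exact: maximal_axis_segment | exists 1%N => k [->|->]].
- exact: maximal_finite_polyline.
- exact: maximal_infinite_polyline.
Qed.
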